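(* Every Hopf heap $(C,\chi)$ admits a Grunspan map; explicitly $\vartheta(c)=\sum[c_{(1)},[e_{(1)},c_{(3)},c_{(2)}],e_{(2)}]$ for all $c\in C$, where $e\in C$ is any element with $\varepsilon(e)=1$.
   Context: Work over a field $\mathbb{F}$; coalgebras coassociative, counital, of dimension at least one, Sweedler notation; $C^{\mathrm{co}}$ is the co-opposite coalgebra. A Hopf heap is a coalgebra $C$ with a coalgebra map $\chi:C\otimes C^{\mathrm{co}}\otimes C\to C$, $a\otimes b\otimes c\mapsto[a,b,c]$ (so $\Delta[a,b,c]=\sum[a_{(1)},b_{(2)},c_{(1)}]\otimes[a_{(2)},b_{(1)},c_{(2)}]$, $\varepsilon[a,b,c]=\varepsilon(a)\varepsilon(b)\varepsilon(c)$), such that $[[a,b,c],d,e]=[a,b,[c,d,e]]$ and $\sum[c_{(1)},c_{(2)},a]=\sum[a,c_{(1)},c_{(2)}]=\varepsilon(c)a$ for all $a,b,c,d,e\in C$. A Grunspan map is a coalgebra map $\vartheta:C\to C$ with $[[a,b,\vartheta(c)],d,e]=[a,[d,c,b],e]$ for all $a,b,c,d,e\in C$. *)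

From HB Require Import structures.
From mathcomp Require Import all_boot all_order all_algebra.
Set Implicit Arguments. Unset Strict Implicit. Unset Printing Implicit Defensive.
Import GRing.Theory.
Local Open Scope ring_scope.

(* An element of V (x) V is represented
   by a finite list of pairs [(x_i, y_i)] standing for sum_i x_i (x) y_i; two
   representatives denote the same tensor iff every bilinear map (into every
   F-vector space) takes the same value on them (universal property of the
   tensor product).  Likewise for V (x) V (x) V with trilinear maps. *)

Section Coalg.
Variable F : fieldType.

Definition lin (U W : lmodType F) (f : U -> W) : Prop :=
  forall (a : F) (u v : U), f (a *: u + v) = a *: f u + f v.

Definition bilin (U W : lmodType F) (b : U -> U -> W) : Prop :=
  (forall x, lin (b x)) /\ (forall y, lin (fun x => b x y)).

Definition trilin (U W : lmodType F) (t : U -> U -> U -> W) : Prop :=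
  (forall y z, lin (fun x => t x y z)) /\ (forall x z, lin (fun y => t x y z))
  /\ (forall x y, lin (t x y)).

Definition teq2 (V : lmodType F) (s t : seq (V * V)) : Prop :=
  forall (W : lmodType F) (b : V -> V -> W), bilin b ->
    \sum_(p <- s) b p.1 p.2 = \sum_(p <- t) b p.1 p.2.

(* equality in V (x) V (x) V; triples are ((x, y), z) for x (x) y (x) z *)
Definition teq3 (V : lmodType F) (s t : seq (V * V * V)) : Prop :=
  forall (W : lmodType F) (b : V -> V -> V -> W), trilin b ->
    \sum_(p <- s) b p.1.1 p.1.2 p.2 = \sum_(p <- t) b p.1.1 p.1.2 p.2.

(* Sweedler representative of (Delta (x) id) Delta c : c_(1) (x) c_(2) (x) c_(3) *)
Definition cop3 (V : lmodType F) (cop : V -> seq (V * V)) (c : V)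
  : seq (V * V * V) :=
  [seq (q.1, q.2, p.2) | p <- cop c, q <- cop p.1].

Definition coalgebra (V : lmodType F) (cop : V -> seq (V * V)) (cou : V -> F)
  : Prop :=
  [/\ forall (a : F) (u v : V),
        teq2 (cop (a *: u + v)) ([seq (a *: p.1, p.2) | p <- cop u] ++ cop v),
      forall (a : F) (u v : V), cou (a *: u + v) = a * cou u + cou v,
      forall c : V,
        teq3 (cop3 cop c) [seq (p.1, q.1, q.2) | p <- cop c, q <- cop p.2],
      forall c : V, \sum_(p <- cop c) cou p.1 *: p.2 = c
    & forall c : V, \sum_(p <- cop c) cou p.2 *: p.1 = c].

(* chi : C (x) C^co (x) C -> C, given as a trilinear map, is a coalgebra map *)
Definition heap_coalg_map (V : lmodType F) (cop : V -> seq (V * V))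
  (cou : V -> F) (chi : V -> V -> V -> V) : Prop :=
  [/\ trilin chi,
      forall a b c : V,
        teq2 (cop (chi a b c))
          [seq (chi p.1 qr.1.2 qr.2.1, chi p.2 qr.1.1 qr.2.2)
             | p <- cop a, qr <- [seq (q, r) | q <- cop b, r <- cop c]]
    & forall a b c : V, cou (chi a b c) = cou a * cou b * cou c].

Definition hopf_heap (V : lmodType F) (cop : V -> seq (V * V))
  (cou : V -> F) (chi : V -> V -> V -> V) : Prop :=
  [/\ heap_coalg_map cop cou chi,
      forall a b c d e : V, chi (chi a b c) d e = chi a b (chi c d e),
      forall a c : V, \sum_(p <- cop c) chi p.1 p.2 a = cou c *: a
    & forall a c : V, \sum_(p <- cop c) chi a p.1 p.2 = cou c *: a].

Definition coalg_endo (V : lmodType F) (cop : V -> seq (V * V))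
  (cou : V -> F) (theta : V -> V) : Prop :=
  [/\ lin theta,
      forall c : V, teq2 (cop (theta c)) [seq (theta p.1, theta p.2) | p <- cop c]
    & forall c : V, cou (theta c) = cou c].

Definition grunspan (V : lmodType F) (cop : V -> seq (V * V))
  (cou : V -> F) (chi : V -> V -> V -> V) (theta : V -> V) : Prop :=
  coalg_endo cop cou theta /\
  forall a b c d e : V, chi (chi a b (theta c)) d e = chi a (chi d c b) e.

(* theta(c) = sum [c_(1), [e_(1), c_(3), c_(2)], e_(2)] *)
Definition heap_theta (V : lmodType F) (cop : V -> seq (V * V))
  (chi : V -> V -> V -> V) (e : V) (c : V) : V :=
  \sum_(t <- cop3 cop c) \sum_(r <- cop e) chi t.1.1 (chi r.1 t.2 t.1.2) r.2.

End Coalg.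

From mathcomp Require Import all_boot all_order all_algebra ring.
Set Implicit Arguments. Unset Strict Implicit. Unset Printing Implicit Defensive.
Import GRing.Theory.
Local Open Scope ring_scope.

(* Write [a, b, c] for chi a b c and fix e in C with eps(e) = 1.  The proof
   revolves around the sandwich  S_b(p, q, w) = sum [b_(1), [p, q, b_(2)], w].
   Its key property (sandwich_counit) is that it depends on b only through
   eps(b): both S_b(p, q, w) and eps(b) S_e(p, q, w) are values of one and the
   same Sweedler sum, simplified once with left cancellation and once with a
   right-inverse property of S_e.  Reversing chi on the co-opposite coalgebra
   yields again a Hopf heap, which gives the mirror statement for free.

   For theta = heap_theta e one then gets theta(c) = sum S_e(e_(1), c, e_(2)),
   so theta is linear and preserves the counit, and the two identities
     [a, [d, c, b], f] = [a, b, S_e(d, c, f)]   and   S_e(d, c, f) = [theta c, d, f]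
   which together with associativity are the Grunspan identity.  Multiplicativity
   of the coproduct follows by expanding Delta theta(c) with the coalgebra-map
   property of chi and decoupling the legs of the copies of e.  Finally a
   nonzero coalgebra contains an element of counit one, giving existence. *)

Existing Class coalgebra.
Existing Class hopf_heap.

Section LinearMaps.
Variable F : fieldType.
Implicit Types U W : lmodType F.

Lemma linD U W (f : U -> W) : lin f -> forall u v, f (u + v) = f u + f v.
Proof. by move=> f_lin u v; have := f_lin 1 u v; rewrite !scale1r. Qed.

Lemma lin0 U W (f : U -> W) : lin f -> f 0 = 0.
Proof.
by move=> f_lin; have := linD f_lin 0 0; rewrite addr0 -{1}[f 0]addr0 => /addrI.
Qed.

Lemma linZ U W (f : U -> W) : lin f -> forall a u, f (a *: u) = a *: f u.
Proof. by move=> f_lin a u; have := f_lin a u 0; rewrite addr0 lin0 // addr0. Qed.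

Lemma lin_sum U W (f : U -> W) I (s : seq I) (G : I -> U) : lin f ->
  f (\sum_(i <- s) G i) = \sum_(i <- s) f (G i).
Proof.
move=> f_lin; elim: s => [|i s IHs]; first by rewrite !big_nil lin0.
by rewrite !big_cons linD // IHs.
Qed.

Lemma lin_id U : lin (fun x : U => x). Proof. by []. Qed.

Lemma lin_comp U U' W (f : U' -> W) (g : U -> U') :
  lin f -> lin g -> lin (fun x => f (g x)).
Proof. by move=> f_lin g_lin a u v; rewrite g_lin f_lin. Qed.

Lemma lin_sumf U W I (s : seq I) (G : I -> U -> W) :
  (forall i, lin (G i)) -> lin (fun x => \sum_(i <- s) G i x).
Proof.
move=> G_lin a u v; rewrite scaler_sumr -big_split /=.
by apply: eq_bigr => i _; rewrite G_lin.
Qed.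

Lemma lin_scale U W (f : U -> W) (k : F) : lin f -> lin (fun x => k *: f x).
Proof. by move=> f_lin a u v; rewrite f_lin scalerDr !scalerA mulrC. Qed.

End LinearMaps.

Section Sweedler.
Context {F : fieldType} {V : lmodType F}.
Variables (cop : V -> seq (V * V)) (cou : V -> F).

Definition sweedler (W : lmodType F) (c : V) (f : V -> V -> W) : W :=
  \sum_(p <- cop c) f p.1 p.2.

Local Notation sw := sweedler.

Lemma sw_ext (W : lmodType F) c (f g : V -> V -> W) :
  (forall x y, f x y = g x y) -> sw c f = sw c g.
Proof. by move=> fg; apply: eq_bigr => p _; apply: fg. Qed.

Lemma sw_exch (W : lmodType F) a b (G : V -> V -> V -> V -> W) :
  sw a (fun x y => sw b (G x y)) = sw b (fun z w => sw a (fun x y => G x y z w)).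
Proof. exact: exchange_big. Qed.

Lemma sw_pull (W W' : lmodType F) (L : W -> W') c (f : V -> V -> W) :
  lin L -> L (sw c f) = sw c (fun x y => L (f x y)).
Proof. exact: lin_sum. Qed.

Lemma sw_scale (W : lmodType F) k c (f : V -> V -> W) :
  k *: sw c f = sw c (fun x y => k *: f x y).
Proof. exact: scaler_sumr. Qed.

Lemma lin_swF (W : lmodType F) c (f : V -> V -> V -> W) :
  (forall y z, lin (fun x => f x y z)) -> lin (fun x => sw c (f x)).
Proof. by move=> f_lin; apply: lin_sumf => p; apply: f_lin. Qed.

Context {coalg : coalgebra cop cou}.

Lemma couDZ a u v : cou (a *: u + v) = a * cou u + cou v.
Proof. by case: coalg. Qed.

Lemma cou0 : cou 0 = 0.
Proof.
have := couDZ 1 0 0; rewrite scale1r addr0 mul1r => cou00.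
by apply: (addIr (cou 0)); rewrite add0r -cou00.
Qed.

Lemma couZ a u : cou (a *: u) = a * cou u.
Proof. by rewrite -[a *: u]addr0 couDZ cou0 addr0. Qed.

Lemma cou_sum I (s : seq I) (G : I -> V) :
  cou (\sum_(i <- s) G i) = \sum_(i <- s) cou (G i).
Proof.
elim: s => [|i s IHs]; first by rewrite !big_nil cou0.
by rewrite !big_cons -IHs -[G i]scale1r couDZ mul1r scale1r.
Qed.

(* The comultiplication is linear, hence so is a Sweedler sum in c. *)
Lemma sw_lin (W : lmodType F) (f : V -> V -> W) :
  bilin f -> lin (fun c => sw c f).
Proof.
move=> [f_lin2 f_lin1] a u v; case: coalg => Delta_lin _ _ _ _.
rewrite /sw (Delta_lin a u v W f) ?big_cat ?big_map //=.
rewrite scaler_sumr; congr (_ + _); apply: eq_bigr => p _ /=.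
exact: (linZ (f_lin1 p.2)).
Qed.

Lemma lin_swE (W : lmodType F) (E : V -> V) (f : V -> V -> W) :
  lin E -> (forall x, lin (f x)) -> (forall y, lin (fun x => f x y)) ->
  lin (fun c => sw (E c) f).
Proof.
by move=> E_lin f_lin2 f_lin1; apply: (lin_comp (f := fun c => sw c f)) => //;
  apply: sw_lin.
Qed.

Lemma sw_counit_l (W : lmodType F) (g : V -> W) c :
  lin g -> sw c (fun x y => cou x *: g y) = g c.
Proof.
case: coalg => _ _ _ counit_l _ g_lin.
rewrite -{2}(counit_l c) lin_sum //.
by apply: eq_bigr => p _; rewrite linZ.
Qed.

Lemma sw_counit_r (W : lmodType F) (g : V -> W) c :
  lin g -> sw c (fun x y => cou y *: g x) = g c.
Proof.
case: coalg => _ _ _ _ counit_r g_lin.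
rewrite -{2}(counit_r c) lin_sum //.
by apply: eq_bigr => p _; rewrite linZ.
Qed.

Lemma counit_mul c : \sum_(p <- cop c) cou p.1 * cou p.2 = cou c.
Proof.
case: coalg => _ _ _ counit_l _; rewrite -{2}(counit_l c) cou_sum.
by apply: eq_bigr => p _; rewrite couZ.
Qed.

Lemma sw_coassoc (W : lmodType F) c (h : V -> V -> V -> W) : trilin h ->
  sw c (fun x y => sw x (fun x1 x2 => h x1 x2 y)) =
  sw c (fun x y => sw y (fun y1 y2 => h x y1 y2)).
Proof.
case: coalg => _ _ coassoc _ _ h_lin; have := coassoc c W h h_lin.
by rewrite /cop3 /sw !big_allpairs_dep.
Qed.

Lemma sw_coassoc4 (W : lmodType F) (h : V -> V -> V -> V -> W) c :
  (forall b c d, lin (fun a => h a b c d)) -> (forall a c d, lin (fun b => h a b c d)) ->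
  (forall a b d, lin (fun c => h a b c d)) -> (forall a b c, lin (fun d => h a b c d)) ->
  sw c (fun v1 v2 => sw v1 (fun a1 a2 => sw v2 (fun w1 w2 => h a1 a2 w1 w2))) =
  sw c (fun v1 v2 => sw v1 (fun x1 x2 => sw x2 (fun m1 m2 => h x1 m1 m2 v2))).
Proof.
move=> h1 h2 h3 h4.
under sw_ext => v1 v2 do rewrite sw_exch.
rewrite -sw_coassoc; last first.
  split; [|split] => ? ? /=.
  - by apply: sw_lin; split => ? /=; [apply: h2 | apply: h1].
  - by apply: lin_swF => ? ?; apply: h3.
  - by apply: lin_swF => ? ?; apply: h4.
by apply: sw_ext => v1 v2; rewrite sw_coassoc.
Qed.

Lemma exists_counit_one : (exists v : V, v != 0) -> exists e, cou e = 1.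
Proof.
case=> v nz_v.
have [/hasP [p _ nz_p] | /hasPn all0] := boolP (has (fun p => cou p.1 != 0) (cop v)).
  by exists ((cou p.1)^-1 *: p.1); rewrite couZ mulVf.
case: coalg => _ _ _ counit_l _; case/eqP: nz_v.
rewrite -(counit_l v) big1_seq // => p p_v.
by have := all0 p p_v; rewrite negbK => /eqP ->; rewrite scale0r.
Qed.

End Sweedler.

Section HeapCalculus.
Context {F : fieldType} {V : lmodType F}.
Variables (cop : V -> seq (V * V)) (cou : V -> F) (chi : V -> V -> V -> V).
Context {coalg : coalgebra cop cou} {heap : hopf_heap cop cou chi}.
Local Notation sw := (sweedler cop).

Lemma chi_trilin : trilin chi. Proof. by case: heap => -[]. Qed.

Lemma lin_chi1 (E : V -> V) y z : lin E -> lin (fun x => chi (E x) y z).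
Proof.
by move=> E_lin; apply: (lin_comp (f := fun t => chi t y z)) => //; case: chi_trilin.
Qed.

Lemma lin_chi2 (E : V -> V) y z : lin E -> lin (fun x => chi y (E x) z).
Proof.
by move=> E_lin; apply: (lin_comp (f := fun t => chi y t z)) => //; case: chi_trilin => _ [].
Qed.

Lemma lin_chi3 (E : V -> V) y z : lin E -> lin (fun x => chi y z (E x)).
Proof.
by move=> E_lin; apply: (lin_comp (f := fun t => chi y z t)) => //; case: chi_trilin => _ [].
Qed.

Lemma chiZ1 k a b c : chi (k *: a) b c = k *: chi a b c.
Proof. exact: (linZ (lin_chi1 b c (@lin_id _ V))). Qed.

Lemma chiZ3 k a b c : chi a b (k *: c) = k *: chi a b c.
Proof. exact: (linZ (lin_chi3 a b (@lin_id _ V))). Qed.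

Lemma chi_sw1 c (f : V -> V -> V) b d :
  chi (sw c f) b d = sw c (fun x y => chi (f x y) b d).
Proof. by apply: (sw_pull _ (L := fun t => chi t b d)); apply: lin_chi1. Qed.

Lemma chi_sw3 c (f : V -> V -> V) a b :
  chi a b (sw c f) = sw c (fun x y => chi a b (f x y)).
Proof. by apply: (sw_pull _ (L := fun t => chi a b t)); apply: lin_chi3. Qed.

Lemma chi_assoc a b c d e : chi (chi a b c) d e = chi a b (chi c d e).
Proof. by case: heap. Qed.

Lemma chi_cancel_l a c : sw c (fun x y => chi x y a) = cou c *: a.
Proof. by case: heap => _ _ cancel_l _; apply: cancel_l. Qed.

Lemma chi_cancel_r a c : sw c (fun x y => chi a x y) = cou c *: a.
Proof. by case: heap => _ _ _ cancel_r; apply: cancel_r. Qed.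

Lemma cou_chi a b c : cou (chi a b c) = cou a * cou b * cou c.
Proof. by case: heap => -[]. Qed.

Lemma sw_chi (W : lmodType F) a b c (f : V -> V -> W) : bilin f ->
  sw (chi a b c) f = sw a (fun a1 a2 => sw b (fun b1 b2 => sw c (fun c1 c2 =>
     f (chi a1 b2 c1) (chi a2 b1 c2)))).
Proof.
case: heap => -[_ comult _] _ _ _ f_bilin.
rewrite /sweedler (comult a b c W f f_bilin) big_allpairs_dep.
by apply: eq_bigr => p _; rewrite big_allpairs_dep.
Qed.

End HeapCalculus.

Ltac lin_tac := repeat (first
  [ apply: lin_id | apply: lin_chi1 | apply: lin_chi2 | apply: lin_chi3
  | apply: lin_swF | apply: lin_swE | apply: lin_scale | move=> ? /= ]).
Ltac bilin_tac := split => ? /=; lin_tac.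
Ltac trilin_tac := split; [|split]; move=> ? ? /=; lin_tac.

Section CoOpposite.
Context {F : fieldType} {V : lmodType F}.
Variables (cop : V -> seq (V * V)) (cou : V -> F) (chi : V -> V -> V -> V).

Definition cop_op (c : V) : seq (V * V) := [seq (p.2, p.1) | p <- cop c].
Definition chi_op (a b c : V) : V := chi c b a.

Lemma sw_op (W : lmodType F) c (f : V -> V -> W) :
  sweedler cop_op c f = sweedler cop c (fun x y => f y x).
Proof. exact: big_map. Qed.

Context {coalg : coalgebra cop cou}.

Lemma coalgebra_op : coalgebra cop_op cou.
Proof.
have [Delta_lin cou_lin _ counit_l counit_r] := coalg.
split=> //.
- move=> a u v W b [b_lin2 b_lin1].
  have b_op : bilin (fun x y => b y x) by split.
  rewrite /cop_op big_map (Delta_lin a u v W _ b_op) !big_cat !big_map /=.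
  congr (_ + _); apply: eq_bigr => p _ /=.
  by rewrite (linZ (b_lin1 _)) (linZ (b_lin2 _)).
- move=> c W h [h1 [h2 h3]].
  have h_op : trilin (fun x y z => h z y x) by split; [|split].
  rewrite /cop3 /cop_op !big_allpairs_dep !big_map.
  under eq_bigr => p _ do rewrite big_map.
  under [RHS]eq_bigr => p _ do rewrite big_map.
  exact: esym (sw_coassoc c h_op).
- by move=> c; rewrite big_map; apply: counit_r.
- by move=> c; rewrite big_map; apply: counit_l.
Qed.

Context {heap : hopf_heap cop cou chi}.

Lemma hopf_heap_op : hopf_heap cop_op cou chi_op.
Proof.
have [t1 [t2 t3]] := chi_trilin (cop := cop) (cou := cou).
split=> //.
- split.
  + by split; [|split] => ? ?; [apply: t3 | apply: t2 | apply: t1].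
  + move=> a b c W g [g_lin2 g_lin1].
    have g_op : bilin (fun x y => g y x) by split.
    transitivity (sweedler cop (chi c b a) (fun x y => g y x)); first exact: big_map.
    rewrite sw_chi // sw_exch.
    under sw_ext => ? ? do rewrite sw_exch.
    rewrite sw_exch /sweedler big_allpairs_dep big_map.
    apply: eq_bigr => p _; rewrite big_allpairs_dep big_map.
    by apply: eq_bigr => q _; rewrite big_map.
  + by move=> a b c; rewrite /chi_op cou_chi; ring.
- by move=> a b c d e; rewrite /chi_op chi_assoc.
- by move=> a c; rewrite /cop_op big_map; apply: chi_cancel_r.
- by move=> a c; rewrite /cop_op big_map; apply: chi_cancel_l.
Qed.

End CoOpposite.

Section Sandwich.
Context {F : fieldType} {V : lmodType F}.
Variables (cop : V -> seq (V * V)) (cou : V -> F) (chi : V -> V -> V -> V).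
Context {coalg : coalgebra cop cou} {heap : hopf_heap cop cou chi}.
Local Notation sw := (sweedler cop).

Definition sandwich (b p q w : V) : V := sw b (fun b1 b2 => chi b1 (chi p q b2) w).

Lemma sandwich_sw b p q c (f : V -> V -> V) :
  sandwich b p q (sw c f) = sw c (fun x y => sandwich b p q (f x y)).
Proof. by rewrite /sandwich sw_exch; apply: sw_ext => x y; rewrite chi_sw3. Qed.

Lemma sandwichZ b p q k w : sandwich b p q (k *: w) = k *: sandwich b p q w.
Proof. by rewrite /sandwich sw_scale; apply: sw_ext => x y; rewrite chiZ3. Qed.

(* Left cancellation of [p, q, b], whose coproduct is
   [p_(1), q_(2), b_(1)] (x) [p_(2), q_(1), b_(2)]. *)
Lemma sandwich_cancel b p q w :
  sw p (fun p1 p2 => sw q (fun q1 q2 => chi p1 q2 (sandwich b p2 q1 w))) =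
  (cou p * cou q * cou b) *: w.
Proof.
rewrite -cou_chi -(chi_cancel_l w (chi p q b)) sw_chi; last by bilin_tac.
apply: sw_ext => ? ?; apply: sw_ext => ? ?; rewrite /sandwich chi_sw3.
by apply: sw_ext => ? ?; rewrite chi_assoc.
Qed.

Variable e : V.
Hypothesis cou_e : cou e = 1.

Lemma sandwich_inverse p q v :
  sw p (fun p1 p2 => sw q (fun q1 q2 => sandwich e p1 q2 (chi p2 q1 v))) =
  (cou p * cou q) *: v.
Proof.
(* split the leg r2 of e so that a right cancellation of [p, q, _] appears *)
have split_leg p1 p2 q1 q2 r1 r2 :
  chi r1 (chi p1 q2 r2) (chi p2 q1 v) =
  sw r2 (fun s1 s2 => sw s1 (fun t1 t2 =>
     chi (chi r1 (chi p1 q2 t1) (chi p2 q1 t2)) s2 v)).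
  rewrite sw_coassoc; last by trilin_tac.
  rewrite -[LHS](sw_counit_r (g := fun s => chi r1 (chi p1 q2 s) (chi p2 q1 v))) /=;
    last by lin_tac.
  apply: sw_ext => s1 s2.
  under sw_ext => t1 t2 do rewrite !chi_assoc.
  by rewrite -!chi_sw3 chi_cancel_l !chiZ3.
(* right cancellation of [p, q, s_(1)] *)
have cancel_mid z s1 s2 :
  sw p (fun p1 p2 => sw q (fun q1 q2 => sw s1 (fun t1 t2 =>
     chi (chi z (chi p1 q2 t1) (chi p2 q1 t2)) s2 v))) =
  (cou p * cou q * cou s1) *: chi z s2 v.
  by rewrite -cou_chi -chiZ1 -chi_cancel_r chi_sw1 sw_chi //; bilin_tac.
rewrite /sandwich.
under sw_ext => p1 p2 do under sw_ext => q1 q2 do under sw_ext => r1 r2 do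
  rewrite split_leg.
under sw_ext => p1 p2 do rewrite sw_exch.
rewrite sw_exch.
under sw_ext => z w do under sw_ext => p1 p2 do rewrite sw_exch.
under sw_ext => z w do rewrite sw_exch.
have counit_mid z w : sw w (fun s1 s2 => cou s1 *: chi z s2 v) = chi z w v.
  by rewrite sw_counit_l //; lin_tac.
under sw_ext => z w do under sw_ext => s1 s2 do rewrite cancel_mid -scalerA.
under sw_ext => z w do rewrite -sw_scale counit_mid.
by rewrite -sw_scale chi_cancel_l cou_e scale1r.
Qed.

(* Both sides arise from sum S_e(p_(1), q_(3), [p_(2), q_(2), S_b(p_(3), q_(1), w)]),
   evaluated with sandwich_cancel and with sandwich_inverse respectively. *)
Lemma sandwich_counit b p q w : sandwich b p q w = cou b *: sandwich e p q w.
Proof.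
pose E pa pb pc qa qb qc := sandwich e pa qc (chi pb qb (sandwich b pc qa w)).
have via_cancel : sw p (fun pa pr => sw pr (fun pb pc => sw q (fun qr qc =>
    sw qr (fun qa qb => E pa pb pc qa qb qc)))) = cou b *: sandwich e p q w.
  have counit_q pa : sw q (fun qr qc => cou qr *: (cou b *: sandwich e pa qc w)) =
      cou b *: sandwich e pa q w.
    by rewrite sw_counit_l //; rewrite /sandwich; lin_tac.
  rewrite /E.
  under sw_ext => pa pr do rewrite sw_exch.
  under sw_ext => pa pr do under sw_ext => qr qc do under sw_ext => pb pc do
    rewrite -sandwich_sw.
  under sw_ext => pa pr do under sw_ext => qr qc do
    rewrite -sandwich_sw sandwich_cancel sandwichZ -!scalerA.
  under sw_ext => pa pr do rewrite -sw_scale counit_q.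
  by rewrite sw_counit_r //; rewrite /sandwich; lin_tac.
have via_inverse : sw p (fun pa pr => sw pr (fun pb pc => sw q (fun qr qc =>
    sw qr (fun qa qb => E pa pb pc qa qb qc)))) = sandwich b p q w.
  have counit_q pl pc :
      sw q (fun z w0 => cou w0 *: (cou pl *: sandwich b pc z w)) =
      cou pl *: sandwich b pc q w.
    by rewrite sw_counit_r //; rewrite /sandwich; lin_tac.
  rewrite /E.
  under sw_ext => pa pr.
    under sw_ext => pb pc.
      rewrite sw_coassoc; last by rewrite /sandwich; trilin_tac.
      over.
    over.
  rewrite -sw_coassoc /=; last by rewrite /sandwich; trilin_tac.
  under sw_ext => pl pc do rewrite sw_exch.
  under sw_ext => pl pc do under sw_ext => z w0 do rewrite sandwich_inverse mulrC -scalerA.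
  under sw_ext => pl pc do rewrite counit_q.
  by rewrite sw_counit_l //; rewrite /sandwich; lin_tac.
by rewrite -via_inverse via_cancel.
Qed.

End Sandwich.

Section GrunspanMap.
Context {F : fieldType} {V : lmodType F}.
Variables (cop : V -> seq (V * V)) (cou : V -> F) (chi : V -> V -> V -> V).
Context {coalg : coalgebra cop cou} {heap : hopf_heap cop cou chi}.
Variable e : V.
Hypothesis cou_e : cou e = 1.
Local Notation sw := (sweedler cop).
Local Notation S := (sandwich cop chi).
Local Notation theta := (heap_theta cop chi e).

(* Mirror image of sandwich_counit, read off in the opposite heap. *)
Lemma sandwich_op_counit b w q p :
  sw b (fun b1 b2 => chi w (chi b1 q p) b2) =
  cou b *: sw e (fun b1 b2 => chi w (chi b1 q p) b2).
Proof.
have := @sandwich_counit _ _ _ _ _ (@coalgebra_op _ _ cop cou coalg)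
  (@hopf_heap_op _ _ cop cou chi heap) e cou_e b p q w.
by rewrite /sandwich !sw_op.
Qed.

Lemma theta_expand c : theta c =
  sw c (fun x y => sw x (fun c1 c2 => sw e (fun r1 r2 => chi c1 (chi r1 y c2) r2))).
Proof. by rewrite /heap_theta /cop3 big_allpairs_dep. Qed.

(* theta c = sum S_e(e_(1), c, e_(2)): c now occurs once, linearly. *)
Lemma theta_sandwich c : theta c = sw e (fun e1 e2 => S e e1 c e2).
Proof.
rewrite theta_expand.
under sw_ext => x y do rewrite sw_exch.
under sw_ext => x y do under sw_ext => r1 r2 do
  rewrite -/(sandwich cop chi x r1 y r2) (sandwich_counit cou_e).
rewrite sw_exch; apply: sw_ext => r1 r2.
by rewrite sw_counit_l //; rewrite /sandwich; lin_tac.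
Qed.

Lemma sandwich_absorb c p : sw p (fun p1 p2 => S e p1 c p2) = cou p *: theta c.
Proof.
rewrite /sandwich sw_exch.
under sw_ext => v1 v2 do rewrite sandwich_op_counit.
by rewrite -sw_scale theta_sandwich /sandwich sw_exch.
Qed.

(* [a, [d, c, b], f] = [a, b, S_e(d, c, f)]: expand b with the right
   cancellation law and absorb the middle leg by sandwich_counit. *)
Lemma chi_middle a d c b f : chi a (chi d c b) f = chi a b (S e d c f).
Proof.
transitivity (sw b (fun x y => cou x *: chi a (chi d c y) f)).
  by rewrite sw_counit_l //; lin_tac.
under sw_ext => x y do rewrite -chiZ1 -chi_cancel_r chi_sw1.
under sw_ext => x y do under sw_ext => x1 x2 do rewrite chi_assoc.
rewrite sw_coassoc; last by trilin_tac.
under sw_ext => x y do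
  rewrite -chi_sw3 -/(sandwich cop chi y d c f) (sandwich_counit cou_e) chiZ3.
by rewrite sw_counit_r //; lin_tac.
Qed.

Lemma sandwich_chi x c y1 y2 f : S e x c (chi y1 y2 f) = chi (S e x c y1) y2 f.
Proof. by rewrite /sandwich chi_sw1; apply: sw_ext => v1 v2; rewrite chi_assoc. Qed.

(* S_e(d, c, f) = [theta c, d, f]: expand d with the left cancellation law
   and absorb the outer leg by sandwich_absorb. *)
Lemma sandwich_theta d c f : S e d c f = chi (theta c) d f.
Proof.
transitivity (sw d (fun x y => cou y *: S e x c f)).
  by rewrite sw_counit_r //; rewrite /sandwich; lin_tac.
under sw_ext => x y do rewrite -sandwichZ -chi_cancel_l sandwich_sw.
under sw_ext => x y do under sw_ext => y1 y2 do rewrite sandwich_chi.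
rewrite -sw_coassoc /=; last by rewrite /sandwich; trilin_tac.
under sw_ext => x y do rewrite -chi_sw1 sandwich_absorb chiZ1.
by rewrite sw_counit_l //; lin_tac.
Qed.

Lemma theta_grunspan a b c d f : chi (chi a b (theta c)) d f = chi a (chi d c b) f.
Proof. by rewrite chi_assoc chi_middle sandwich_theta. Qed.

(* theta is linear and counital, since c occurs linearly in theta_sandwich. *)
Lemma theta_lin : lin theta.
Proof.
move=> a x y; rewrite !theta_sandwich.
have S_lin : lin (fun c => sw e (fun e1 e2 => S e e1 c e2)) by rewrite /sandwich; lin_tac.
exact: S_lin.
Qed.

Lemma theta_counit c : cou (theta c) = cou c.
Proof.
rewrite theta_sandwich /sandwich /sweedler cou_sum.
under eq_bigr => r _ do rewrite cou_sum.
under eq_bigr => r _ do under eq_bigr => v _ do rewrite !cou_chi.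
transitivity (\sum_(r <- cop e) \sum_(v <- cop e)
  (cou v.1 * cou v.2) * (cou r.1 * cou r.2 * cou c)).
  by apply: eq_bigr => r _; apply: eq_bigr => v _; ring.
under eq_bigr => r _ do rewrite -big_distrl /= counit_mul cou_e mul1r.
by rewrite -big_distrl /= counit_mul cou_e !mul1r.
Qed.

(* theta is comultiplicative, tested against an arbitrary bilinear f. *)
Section Comultiplicativity.
Variables (W : lmodType F) (f : V -> V -> W).
Hypothesis f_bilin : bilin f.

Lemma lin_f1 (E : V -> V) y : lin E -> lin (fun x => f (E x) y).
Proof. by move=> E_lin; apply: (lin_comp (f := fun t => f t y)) => //; case: f_bilin. Qed.

Lemma lin_f2 (E : V -> V) y : lin E -> lin (fun x => f y (E x)).
Proof. by move=> E_lin; apply: (lin_comp (f := fun t => f y t)) => //; case: f_bilin. Qed.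

Local Ltac lin_f_tac := repeat (first
  [ apply: lin_id | apply: lin_chi1 | apply: lin_chi2 | apply: lin_chi3
  | apply: lin_f1 | apply: lin_f2
  | apply: lin_swF | apply: lin_swE | apply: lin_scale | move=> ? /= ]).

Lemma f_sw1 c (g : V -> V -> V) y : f (sw c g) y = sw c (fun x1 x2 => f (g x1 x2) y).
Proof. by apply: (sw_pull _ (L := fun t => f t y)); apply: lin_f1. Qed.

Lemma f_sw2 c (g : V -> V -> V) x : f x (sw c g) = sw c (fun y1 y2 => f x (g y1 y2)).
Proof. by apply: (sw_pull _ (L := fun t => f x t)); apply: lin_f2. Qed.

Lemma fZ1 k x y : f (k *: x) y = k *: f x y.
Proof. exact: (linZ (lin_f1 y (@lin_id _ V))). Qed.

Lemma fZ2 k x y : f x (k *: y) = k *: f x y.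
Proof. exact: (linZ (lin_f2 x (@lin_id _ V))). Qed.

Lemma sw_sw c (g : V -> V -> V) : sw (sw c g) f = sw c (fun x y => sw (g x y) f).
Proof. by apply: (sw_pull _ (L := fun t => sw t f)); apply: sw_lin. Qed.

Lemma sw_chi_chi a p q r b :
  sw (chi a (chi p q r) b) f =
  sw a (fun a1 a2 => sw p (fun p1 p2 => sw q (fun q1 q2 => sw r (fun r1 r2 =>
    sw b (fun b1 b2 => f (chi a1 (chi p2 q1 r2) b1) (chi a2 (chi p1 q2 r1) b2)))))).
Proof.
rewrite sw_chi //; apply: sw_ext => a1 a2; rewrite sw_chi //.
by split => ? /=; lin_f_tac.
Qed.

(* The two legs of the inner copy of e in Delta theta(c) separate. *)
Lemma decouple_inner p q p' q' s1 s2 :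
  sw e (fun v1 v2 => sw v1 (fun a1 a2 => sw v2 (fun w1 w2 =>
     f (chi a1 (chi p q w2) s1) (chi a2 (chi p' q' w1) s2)))) =
  f (S e p q s1) (S e p' q' s2).
Proof.
rewrite sw_coassoc4; try by move=> *; lin_f_tac.
under sw_ext => v1 v2 do under sw_ext => x1 x2 do
  rewrite -f_sw2 -/(sandwich cop chi x2 p' q' s2) (sandwich_counit cou_e) fZ2.
have counit_x v1 v2 : sw v1 (fun x1 x2 =>
    cou x2 *: f (chi x1 (chi p q v2) s1) (S e p' q' s2)) =
    f (chi v1 (chi p q v2) s1) (S e p' q' s2).
  by rewrite sw_counit_r //; lin_f_tac.
under sw_ext => v1 v2 do rewrite counit_x.
by rewrite -f_sw1.
Qed.

(* Likewise for the outer copy of e. *)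
Lemma decouple_outer c c' :
  sw e (fun r1 r2 => sw r1 (fun p1 p2 => sw r2 (fun s1 s2 =>
     f (S e p2 c s1) (S e p1 c' s2)))) = f (theta c) (theta c').
Proof.
rewrite sw_coassoc4; try by move=> *; rewrite /sandwich; lin_f_tac.
under sw_ext => r1 r2 do under sw_ext => x1 x2 do
  rewrite -f_sw1 sandwich_absorb fZ1.
have counit_x r1 r2 : sw r1 (fun x1 x2 => cou x2 *: f (theta c) (S e x1 c' r2)) =
    f (theta c) (S e r1 c' r2).
  by rewrite sw_counit_r //; rewrite /sandwich; lin_f_tac.
under sw_ext => r1 r2 do rewrite counit_x.
by rewrite -f_sw2 -theta_sandwich.
Qed.

(* Expand Delta theta(c) = Delta of sum [e'_(1), [e_(1), c, e'_(2)], e_(2)],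
   move the legs of c outermost, then decouple e' and e. *)
Lemma theta_comult c : sw (theta c) f = sw c (fun x y => f (theta x) (theta y)).
Proof.
rewrite theta_sandwich /sandwich sw_sw.
under sw_ext => r1 r2 do rewrite sw_sw.
under sw_ext => r1 r2 do under sw_ext => v1 v2 do rewrite sw_chi_chi.
under sw_ext => r1 r2 do under sw_ext => v1 v2 do rewrite sw_exch.
under sw_ext => r1 r2 do rewrite sw_exch.
under sw_ext => r1 r2 do under sw_ext => p1 p2 do under sw_ext => v1 v2 do rewrite sw_exch.
under sw_ext => r1 r2 do under sw_ext => p1 p2 do rewrite sw_exch.
under sw_ext => r1 r2 do under sw_ext => p1 p2 do under sw_ext => q1 q2 do
  under sw_ext => v1 v2 do under sw_ext => a1 a2 do rewrite sw_exch.
under sw_ext => r1 r2 do under sw_ext => p1 p2 do under sw_ext => q1 q2 do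
  under sw_ext => v1 v2 do rewrite sw_exch.
under sw_ext => r1 r2 do under sw_ext => p1 p2 do under sw_ext => q1 q2 do rewrite sw_exch.
under sw_ext => r1 r2 do under sw_ext => p1 p2 do under sw_ext => q1 q2 do
  under sw_ext => s1 s2 do rewrite decouple_inner.
under sw_ext => r1 r2 do rewrite sw_exch.
rewrite sw_exch.
by under sw_ext => q1 q2 do rewrite decouple_outer.
Qed.

End Comultiplicativity.

End GrunspanMap.

Lemma heap_theta_grunspan (F : fieldType) (V : lmodType F)
    (cop : V -> seq (V * V)) (cou : V -> F) (chi : V -> V -> V -> V)
    {coalg : coalgebra cop cou} {heap : hopf_heap cop cou chi} (e : V) :
  cou e = 1 -> grunspan cop cou chi (heap_theta cop chi e).
Proof.
move=> cou_e; split; last exact: theta_grunspan.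
split; [exact: theta_lin | | exact: theta_counit].
by move=> c W f f_bilin; rewrite big_map; apply: theta_comult.
Qed.

Theorem mainTheorem14 (F : fieldType) (V : lmodType F)
  (cop : V -> seq (V * V)) (cou : V -> F) (chi : V -> V -> V -> V) :
  coalgebra cop cou ->
  (exists v : V, v != 0) ->
  hopf_heap cop cou chi ->
  (exists theta : V -> V, grunspan cop cou chi theta) /\
  (forall e : V, cou e = 1 -> grunspan cop cou chi (heap_theta cop chi e)).
Proof.
move=> coalg nonzero heap; split=> [|e cou_e]; last exact: heap_theta_grunspan.
have [e cou_e] := exists_counit_one nonzero.
by exists (heap_theta cop chi e); apply: heap_theta_grunspan.
Qed.
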